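(* Let $v$ be a floating-point value (zero or a normal IEEE 754 double) with $\alpha = DP(v) \le 22$ and $\beta = DS(v) \le 15$. Then $v = round(v \otimes 10^{\alpha}) \div 10^{\alpha}$, where the division is performed in IEEE 754 double-precision arithmetic; that is, this floating-point computation introduces no error and recovers exactly the double $v$.
   Context: Convention: a floating-point value $v$ is identified with the decimal number given by its decimal format $DF(v)$, i.e. its shortest decimal representation that reads back to $v$. For a nonzero terminating decimal $x$, $DP(x)$ is the least nonnegative integer $j$ with $x \times 10^j$ an integer, and $DS(x) = DP(x) + \lfloor \log_{10}|x|\rfloor + 1$; $DP(0)=DS(0)=0$. $v \otimes 10^{i}$ and $a \div 10^i$ denote multiplication and division computed in IEEE 754 double-precision arithmetic (round-to-nearest), with $10^i$ represented as a double. $round(\cdot)$ denotes rounding to the nearest integer. *)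

From Stdlib Require Import Reals ZArith.
Open Scope R_scope.

Definition is_int (r : R) : Prop := exists n : Z, r = IZR n.

(* floor (Stdlib: Int_part r = up r - 1 is the floor of r) *)
Definition floorZ (r : R) : Z := Int_part r.

Definition bpow (e : Z) : R := powerRZ 2 e.

Definition is_double (v : R) : Prop :=
  exists (m e : Z), v = IZR m * bpow e /\ (Z.abs m < 2 ^ 53)%Z
                    /\ (-1074 <= e <= 971)%Z.

(* zero or a normal double (signed zero identified with 0) *)
Definition zero_or_normal (v : R) : Prop :=
  v = 0 \/ (is_double v /\ bpow (-1022) <= Rabs v).

(* mag2 x = the integer k with 2^(k-1) <= |x| < 2^k  (x <> 0) *)
Definition mag2 (x : R) : Z := (floorZ (ln (Rabs x) / ln 2) + 1)%Z.

(* canonical exponent of binary64 (precision 53, emin = -1074) *)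
Definition cexp (x : R) : Z := Z.max (mag2 x - 53) (-1074).

Definition rne_int (r : R) : Z :=
  let f := floorZ r in
  let d := r - IZR f in
  if Rlt_dec d (1/2) then f
  else if Rlt_dec (1/2) d then (f + 1)%Z
  else if Z.even f then f else (f + 1)%Z.

(* IEEE 754 round-to-nearest(-even) of a real into binary64
   (overflow is not modelled; it cannot occur in the statement below) *)
Definition fl (x : R) : R :=
  if Req_EM_T x 0 then 0
  else IZR (rne_int (x * bpow (- cexp x))) * bpow (cexp x).

Definition fmul (a b : R) : R := fl (a * b).
Definition fdiv (a b : R) : R := fl (a / b).

Definition pow10d (i : nat) : R := fl (10 ^ i).

(* round(.) : nearest integer, ties away from zero (C round) *)
Definition round_int (r : R) : Z :=
  let f := floorZ r in
  let d := r - IZR f in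
  if Rlt_dec d (1/2) then f
  else if Rlt_dec (1/2) d then (f + 1)%Z
  else if Rle_dec 0 r then (f + 1)%Z else f.

Definition is_decimal (x : R) : Prop :=
  exists (n : Z) (k : nat), x = IZR n / 10 ^ k.

Definition DP_is (x : R) (j : nat) : Prop :=
  is_int (x * 10 ^ j) /\ forall i : nat, (i < j)%nat -> ~ is_int (x * 10 ^ i).

Definition flog10 (x : R) : Z := floorZ (ln (Rabs x) / ln 10).

(* DS x, given j = DP x;  DS 0 = 0 *)
Definition DS_of (x : R) (j : nat) : Z :=
  if Req_EM_T x 0 then 0%Z else (Z.of_nat j + flog10 x + 1)%Z.

(* x is the decimal format DF(v): a shortest decimal reading back to v
   (fewest significant digits DS; among those, closest to v) *)
Definition is_DF (v x : R) : Prop :=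
  is_decimal x /\ fl x = v /\
  forall (y : R) (jx jy : nat), is_decimal y -> fl y = v ->
    DP_is x jx -> DP_is y jy ->
    (DS_of x jx < DS_of y jy)%Z \/
    (DS_of x jx = DS_of y jy /\ Rabs (x - v) <= Rabs (y - v)).

(** Write [x = n / 10^alpha] with [n] an integer.  Since [DS x <= 15], [|n| < 10^15 < 2^50],
    and since [alpha <= 22], [10^alpha] is exact and [x] is zero or in the normal range.
    Rounding to nearest has relative error at most [2^-53], so both [v = fl x] and
    [fl (v * 10^alpha)] are within [3 |n| 2^-53 < 3/8] of [n]: the rounded product is [n]
    itself, and dividing it by [10^alpha] rounds [x] again, giving [v]. *)

From Stdlib Require Import Reals ZArith Lra Lia.
Open Scope R_scope.

Lemma floorZ_Zfloor r : floorZ r = Zfloor r.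
Proof. unfold floorZ, Int_part. rewrite up_Zfloor. lia. Qed.

Lemma Rpower_Zfloor_Rlog b y : 1 < b -> 0 < y ->
  Rpower b (IZR (Zfloor (Rlog b y))) <= y < Rpower b (IZR (Zfloor (Rlog b y)) + 1).
Proof.
  intros Hb Hy. rewrite <- (Rpower_Rlog b y) at 2 3 by lra.
  destruct (Zfloor_bound (Rlog b y)).
  split; [apply Rle_Rpower | apply Rpower_lt]; lra.
Qed.

Lemma bpow_Rpower z : bpow z = Rpower 2 (IZR z).
Proof. apply powerRZ_Rpower. lra. Qed.

Lemma bpow_gt_0 z : 0 < bpow z.
Proof. rewrite bpow_Rpower. apply exp_pos. Qed.

Lemma bpow_le a b : (a <= b)%Z -> bpow a <= bpow b.
Proof. intro H. rewrite !bpow_Rpower. apply Rle_Rpower; [lra | now apply IZR_le]. Qed.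

Lemma lt_bpow a b : bpow a < bpow b -> (a < b)%Z.
Proof.
  intro H. apply Z.nle_gt. intro Hba. apply bpow_le in Hba. lra.
Qed.

Lemma bpow_0 : bpow 0 = 1.
Proof. reflexivity. Qed.

Lemma bpow_plus a b : bpow (a + b) = bpow a * bpow b.
Proof. unfold bpow. apply powerRZ_add. lra. Qed.

Lemma bpow_opp a : bpow (- a) = / bpow a.
Proof. apply powerRZ_neg'. Qed.

Lemma bpow_IZR z : (0 <= z)%Z -> bpow z = IZR (2 ^ z).
Proof.
  intro Hz. rewrite <- (Z2Nat.id z Hz). unfold bpow.
  now rewrite <- pow_powerRZ, pow_IZR.
Qed.

Lemma mag2_spec x : x <> 0 -> bpow (mag2 x - 1) <= Rabs x < bpow (mag2 x).
Proof.
  intro Hx. unfold mag2. rewrite floorZ_Zfloor, !bpow_Rpower, Z.add_simpl_r, plus_IZR.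
  apply Rpower_Zfloor_Rlog; [lra | now apply Rabs_pos_lt].
Qed.

Lemma mag2_le x k : x <> 0 -> Rabs x < bpow k -> (mag2 x <= k)%Z.
Proof.
  intros Hx H. destruct (mag2_spec x Hx) as [Hlo _].
  enough (mag2 x - 1 < k)%Z by lia. apply lt_bpow. lra.
Qed.

Lemma mag2_ge x k : x <> 0 -> bpow (k - 1) <= Rabs x -> (k <= mag2 x)%Z.
Proof.
  intros Hx H. destruct (mag2_spec x Hx) as [_ Hhi].
  enough (k - 1 < mag2 x)%Z by lia. apply lt_bpow. lra.
Qed.

Lemma rne_int_IZR z : rne_int (IZR z) = z.
Proof.
  unfold rne_int. rewrite floorZ_Zfloor, ZfloorZ.
  destruct (Rlt_dec (IZR z - IZR z) (1/2)); [reflexivity | lra].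
Qed.

Lemma rne_int_error r : Rabs (IZR (rne_int r) - r) <= 1/2.
Proof.
  unfold rne_int. rewrite floorZ_Zfloor.
  pose proof (Zfloor_bound r). set (f := Zfloor r) in *.
  destruct (Rlt_dec (r - IZR f) (1/2)); [|destruct (Rlt_dec (1/2) (r - IZR f))];
    [|rewrite plus_IZR | destruct (Z.even f); [|rewrite plus_IZR]];
    apply Rabs_le; lra.
Qed.

Lemma round_int_error r : Rabs (IZR (round_int r) - r) <= 1/2.
Proof.
  unfold round_int. rewrite floorZ_Zfloor.
  pose proof (Zfloor_bound r). set (f := Zfloor r) in *.
  destruct (Rlt_dec (r - IZR f) (1/2)); [|destruct (Rlt_dec (1/2) (r - IZR f))];
    [|rewrite plus_IZR | destruct (Rle_dec 0 r); [rewrite plus_IZR|]];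
    apply Rabs_le; lra.
Qed.

Lemma round_int_unique r n : Rabs (r - IZR n) < 1/2 -> round_int r = n.
Proof.
  intro H. pose proof (round_int_error r) as Hr.
  pose proof (Rabs_triang (IZR (round_int r) - r) (r - IZR n)) as Htri.
  replace (IZR (round_int r) - r + (r - IZR n)) with (IZR (round_int r - n)) in Htri
    by (rewrite minus_IZR; ring).
  enough (round_int r - n = 0)%Z by lia.
  apply one_IZR_lt1. destruct (Rabs_def2 (IZR (round_int r - n)) 1); lra.
Qed.

Lemma fl_0 : fl 0 = 0.
Proof. unfold fl. now destruct (Req_EM_T 0 0). Qed.

Lemma fl_generic x m e : x = IZR m * bpow e -> (Z.abs m < 2 ^ 53)%Z -> (-1074 <= e)%Z ->
  fl x = x.
Proof.
  intros Hx Hm He. unfold fl. destruct (Req_EM_T x 0) as [->|Hx0]; [reflexivity|].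
  assert (Hc : (cexp x <= e)%Z).
  { unfold cexp. enough (mag2 x <= e + 53)%Z by lia.
    apply mag2_le; [exact Hx0|].
    rewrite Hx, Rabs_mult, (Rabs_pos_eq (bpow e)), bpow_plus, (bpow_IZR 53), <- abs_IZR
      by (lia || apply Rlt_le, bpow_gt_0).
    rewrite (Rmult_comm (bpow e)).
    apply Rmult_lt_compat_r; [apply bpow_gt_0 | now apply IZR_lt]. }
  assert (Hm' : x * bpow (- cexp x) = IZR (m * 2 ^ (e - cexp x))).
  { rewrite mult_IZR, <- bpow_IZR, Hx, Rmult_assoc, <- bpow_plus by lia.
    reflexivity. }
  rewrite Hm', rne_int_IZR, <- Hm', Rmult_assoc, <- bpow_plus, Z.add_opp_diag_l, bpow_0.
  apply Rmult_1_r.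
Qed.

(** In the normal range the unit in the last place of [x] is at most [2^-52 |x|]. *)
Lemma fl_relative_error x : bpow (-1022) <= Rabs x ->
  Rabs (fl x - x) <= Rabs x * bpow (-53).
Proof.
  intro H.
  assert (Hx : x <> 0).
  { intros ->. rewrite Rabs_R0 in H. pose proof (bpow_gt_0 (-1022)). lra. }
  unfold fl. destruct (Req_EM_T x 0) as [|_]; [contradiction|].
  assert (Hc : cexp x = (mag2 x - 53)%Z).
  { pose proof (mag2_ge x (-1021) Hx H). unfold cexp. lia. }
  set (c := cexp x) in *. set (r := x * bpow (- c)).
  assert (Hrx : x = r * bpow c).
  { unfold r. rewrite Rmult_assoc, <- bpow_plus, Z.add_opp_diag_l, bpow_0. ring. }
  assert (Hulp : bpow c = 2 * (bpow (mag2 x - 1) * bpow (-53))).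
  { replace 2 with (bpow 1) by (rewrite bpow_IZR by lia; reflexivity).
    rewrite <- !bpow_plus. f_equal. lia. }
  destruct (mag2_spec x Hx) as [Hmag _].
  pose proof (rne_int_error r). pose proof (bpow_gt_0 (-53)).
  rewrite Hrx at 1.
  replace (IZR (rne_int r) * bpow c - r * bpow c) with ((IZR (rne_int r) - r) * bpow c)
    by ring.
  rewrite Rabs_mult, (Rabs_pos_eq (bpow c)) by apply Rlt_le, bpow_gt_0.
  apply Rle_trans with (1/2 * bpow c).
  - apply Rmult_le_compat_r; [apply Rlt_le, bpow_gt_0 | assumption].
  - rewrite Hulp. nra.
Qed.

(** [10^a = 5^a * 2^a] with [5^22 < 2^53]. *)
Lemma pow10d_exact a : (a <= 22)%nat -> pow10d a = 10 ^ a.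
Proof.
  intro Ha. unfold pow10d. apply fl_generic with (5 ^ Z.of_nat a)%Z (Z.of_nat a).
  - replace 10 with (5 * 2) by ring.
    unfold bpow. now rewrite Rpow_mult_distr, pow_IZR, pow_powerRZ.
  - rewrite Z.abs_eq by lia.
    apply Z.le_lt_trans with (5 ^ 22)%Z; [apply Z.pow_le_mono_r; lia | reflexivity].
  - lia.
Qed.

Lemma Rabs_mul_pow10_lt_of_DS x a : (DS_of x a <= 15)%Z -> Rabs x * 10 ^ a < 10 ^ 15.
Proof.
  unfold DS_of, flog10. destruct (Req_EM_T x 0) as [->|Hx]; intro Hds.
  { rewrite Rabs_R0, Rmult_0_l. apply pow_lt. lra. }
  rewrite floorZ_Zfloor in Hds.
  destruct (Rpower_Zfloor_Rlog 10 (Rabs x)) as [_ Hlt]; [lra | now apply Rabs_pos_lt|].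
  rewrite <- !Rpower_pow by lra.
  apply Rlt_le_trans with (Rpower 10 (IZR (Zfloor (Rlog 10 (Rabs x))) + 1 + INR a)).
  - rewrite Rpower_plus. apply Rmult_lt_compat_r; [apply exp_pos | exact Hlt].
  - apply Rle_Rpower; [lra|]. rewrite !INR_IZR_INZ, <- !plus_IZR.
    apply IZR_le. unfold Rlog. lia.
Qed.

Lemma bpow_m1022_le_inv_pow10 a : (a <= 22)%nat -> bpow (-1022) <= / 10 ^ a.
Proof.
  intro Ha. apply Rle_trans with (bpow (- (80))); [apply bpow_le; lia|].
  rewrite bpow_opp, bpow_IZR by lia.
  apply Rinv_le_contravar; [apply pow_lt; lra|].
  apply Rle_trans with (10 ^ 22); [apply Rle_pow; [lra | exact Ha]|].
  rewrite pow_IZR. apply IZR_le. vm_compute. discriminate.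
Qed.

Lemma fl_decimal_error n a : (a <= 22)%nat ->
  Rabs (fl (IZR n / 10 ^ a) - IZR n / 10 ^ a) <= Rabs (IZR n / 10 ^ a) * bpow (-53).
Proof.
  intro Ha. assert (HP : 0 < 10 ^ a) by (apply pow_lt; lra).
  destruct (Z.eq_dec n 0) as [->|Hn].
  { unfold Rdiv. rewrite Rmult_0_l, fl_0, Rminus_0_r, Rabs_R0. lra. }
  apply fl_relative_error. apply Rle_trans with (/ 10 ^ a).
  - now apply bpow_m1022_le_inv_pow10.
  - unfold Rdiv. rewrite Rabs_mult, (Rabs_pos_eq (/ _)) by (apply Rlt_le, Rinv_0_lt_compat, HP).
    rewrite <- Rmult_1_l at 1. apply Rmult_le_compat_r; [apply Rlt_le, Rinv_0_lt_compat, HP|].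
    rewrite <- abs_IZR. apply IZR_le. lia.
Qed.

(** The two relative errors add up to at most [3 |n| 2^-53 < 3/8]. *)
Lemma round_fl_near_int n y :
  Rabs (IZR n) < bpow 50 ->
  Rabs (y - IZR n) <= Rabs (IZR n) * bpow (-53) ->
  round_int (fl y) = n.
Proof.
  intros Hn Hy. apply round_int_unique.
  set (N := Rabs (IZR n)) in *. set (u := bpow (-53)) in *.
  assert (HNu : N * u < 1/8).
  { replace (1/8) with (bpow 50 * u).
    - apply Rmult_lt_compat_r; [apply bpow_gt_0 | exact Hn].
    - unfold u. rewrite <- bpow_plus. change (50 + -53)%Z with (- (3))%Z.
      rewrite bpow_opp, bpow_IZR by lia. simpl. lra. }
  assert (Hu : 0 < u <= 1) by (split; [apply bpow_gt_0 | unfold u; apply (bpow_le _ 0); lia]).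
  destruct (Z.eq_dec n 0) as [->|Hn0].
  { unfold N in *. rewrite Rabs_R0, Rmult_0_l, Rminus_0_r in *.
    assert (y = 0) as ->.
    { destruct (Req_dec y 0) as [|Hy0]; [assumption|]. apply Rabs_pos_lt in Hy0. lra. }
    rewrite fl_0, Rabs_R0. lra. }
  assert (HN1 : 1 <= N) by (unfold N; rewrite <- abs_IZR; apply IZR_le; lia).
  assert (HyN : N - N * u <= Rabs y <= N + N * u).
  { pose proof (Rabs_triang_inv y (IZR n)) as Hle.
    pose proof (Rabs_triang_inv (IZR n) y) as Hge. rewrite Rabs_minus_sym in Hge.
    fold N in Hle, Hge. lra. }
  assert (Hnormal : bpow (-1022) <= Rabs y).
  { apply Rle_trans with (bpow (- (1))); [apply bpow_le; lia|].
    rewrite bpow_opp, bpow_IZR by lia. simpl. lra. }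
  pose proof (fl_relative_error y Hnormal) as Hfl. fold u in Hfl.
  pose proof (Rabs_triang (fl y - y) (y - IZR n)) as Htri.
  replace (fl y - y + (y - IZR n)) with (fl y - IZR n) in Htri by ring.
  assert (Rabs y * u <= (N + N * u) * u) by (apply Rmult_le_compat_r; lra).
  nra.
Qed.

Theorem theorem3 (v x : R) (alpha : nat) :
  zero_or_normal v ->
  is_DF v x ->
  DP_is x alpha ->
  (alpha <= 22)%nat ->
  (DS_of x alpha <= 15)%Z ->
  v = fdiv (IZR (round_int (fmul v (pow10d alpha)))) (pow10d alpha).
Proof.
  intros _ [_ [Hv _]] [[n Hn] _] Ha Hds.
  unfold fdiv, fmul. rewrite pow10d_exact by exact Ha.
  assert (HP : 0 < 10 ^ alpha) by (apply pow_lt; lra).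
  assert (Hx : x = IZR n / 10 ^ alpha) by (rewrite <- Hn; field; lra).
  assert (Hnx : Rabs (IZR n) = Rabs x * 10 ^ alpha)
    by (rewrite <- Hn, Rabs_mult, (Rabs_pos_eq (10 ^ alpha)) by lra; reflexivity).
  rewrite (round_fl_near_int n (v * 10 ^ alpha)).
  - now rewrite <- Hx.
  - rewrite Hnx. apply Rlt_trans with (10 ^ 15); [now apply Rabs_mul_pow10_lt_of_DS|].
    rewrite bpow_IZR, pow_IZR by lia. apply IZR_lt. reflexivity.
  - rewrite Hnx, <- Hn, <- Hv.
    replace (fl x * 10 ^ alpha - x * 10 ^ alpha) with ((fl x - x) * 10 ^ alpha) by ring.
    replace (Rabs x * 10 ^ alpha * bpow (-53)) with (Rabs x * bpow (-53) * 10 ^ alpha) by ring.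
    rewrite Rabs_mult, (Rabs_pos_eq (10 ^ alpha)) by lra.
    apply Rmult_le_compat_r; [lra|].
    rewrite Hx. now apply fl_decimal_error.
Qed.
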